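(* For each natural number $n\ge 1$, $\mathrm{Log}_{<1}(\mathbb{R}^{n+1})\subsetneq \mathrm{Log}_{<1}(\mathbb{R}^n)$; that is, $\mathrm{Log}_{<1}(\mathbb{R}^n)$ strictly contains $\mathrm{Log}_{<1}(\mathbb{R}^{n+1})$.
   Context: Modal formulas are built from a countable set of propositional variables using $\bot$, $\to$ and one unary modality $\lozenge$. A frame is a pair $(X,R)$; a valuation assigns subsets of $X$ to variables; $x\models\lozenge\varphi$ iff there is $y$ with $xRy$ and $y\models\varphi$. A formula is valid in a frame if true at every point under every valuation. For a metric space $(X,d)$, $\mathrm{Log}_{<1}(X)$ is the set of modal formulas valid in the frame $(X,R_{<1})$, where $xR_{<1}y$ iff $d(x,y)<1$. $\mathbb{R}^n$ carries the Euclidean metric. *)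

From Stdlib Require Import Reals.
From mathcomp Require Import all_boot.

Set Implicit Arguments.

Inductive mformula : Type :=
  | MVar : nat -> mformula
  | MBot : mformula
  | MImp : mformula -> mformula -> mformula
  | MDia : mformula -> mformula.

Fixpoint msat (X : Type) (Rel : X -> X -> Prop) (V : nat -> X -> Prop)
  (x : X) (phi : mformula) : Prop :=
  match phi with
  | MVar p => V p x
  | MBot => False
  | MImp a b => msat Rel V x a -> msat Rel V x b
  | MDia a => exists y, Rel x y /\ msat Rel V y a
  end.

Definition valid_in_frame (X : Type) (Rel : X -> X -> Prop) (phi : mformula) : Prop :=
  forall (V : nat -> X -> Prop) (x : X), msat Rel V x phi.

Definition R_lt1 (X : Type) (d : X -> X -> R) : X -> X -> Prop :=
  fun x y => Rlt (d x y) R1.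

Definition Log_lt1 (X : Type) (d : X -> X -> R) : mformula -> Prop :=
  fun phi => valid_in_frame (R_lt1 d) phi.

Definition Rn (n : nat) : Type := 'I_n -> R.

Definition euclid_dist (n : nat) (x y : Rn n) : R :=
  sqrt (\big[Rplus/R0]_(i < n) (pow (Rminus (x i) (y i)) 2)).

Definition Log_lt1_Rn (n : nat) : mformula -> Prop := Log_lt1 (@euclid_dist n).

From Stdlib Require Import Reals Classical ClassicalEpsilon FunctionalExtensionality.
From mathcomp Require Import all_boot all_order all_algebra.
From mathcomp Require Import Rstruct ring lra zify.
Import Order.TTheory GRing.Theory Num.Theory.
Local Open Scope ring_scope.
Set Implicit Arguments.
Unset Strict Implicit.
Unset Printing Implicit Defensive.

(* In R^n the relation R_{<1} iterated k >= 1 times is exactly |x - y| < k.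
   Dropping the last coordinate is a surjective p-morphism from R^{n+1} onto R^n,
   so validity descends from R^{n+1} to R^n.  For strictness, spread_formula r k M
   denies that from x one can reach points y_0, ..., y_{M-1}, y_i within r_i steps,
   which pairwise cannot reach each other within k_ij steps.  When
   r_i^2 + r_j^2 <= k_ij^2, such points would give M vectors y_i - x with pairwise
   negative inner products, and R^n has at most n+1 of those; so for M = n+2 the
   formula is valid in R^n.  In R^{n+1} the n+2 vertices of a simplex containing its
   centre refute it, once r and k are obtained by rounding the actual distances. *)

Definition MNeg (f : mformula) : mformula := MImp f MBot.
Definition MTop : mformula := MNeg MBot.
Definition MAnd (f g : mformula) : mformula := MNeg (MImp f (MNeg g)).
Fixpoint MDiaN (k : nat) (f : mformula) : mformula :=
  if k is k'.+1 then MDia (MDiaN k' f) else f.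
Definition MBoxN (k : nat) (f : mformula) : mformula := MNeg (MDiaN k (MNeg f)).
Fixpoint MBigAnd (G : nat -> mformula) (m : nat) : mformula :=
  if m is m'.+1 then MAnd (MBigAnd G m') (G m') else MTop.

Fixpoint rel_pow (X : Type) (Rel : X -> X -> Prop) (k : nat) (x z : X) : Prop :=
  if k is k'.+1 then exists y, Rel x y /\ rel_pow Rel k' y z else x = z.

Section DerivedConnectives.
Variables (X : Type) (Rel : X -> X -> Prop) (V : nat -> X -> Prop).

Lemma msat_and f g x :
  msat Rel V x (MAnd f g) <-> msat Rel V x f /\ msat Rel V x g.
Proof.
split=> [h | [hf hg] h]; last exact: h hf hg.
by split; apply: NNPP => hn; apply: h => hf // hg; apply: hn.
Qed.

Lemma msat_bigAnd G m x :
  msat Rel V x (MBigAnd G m) <-> forall i, (i < m)%N -> msat Rel V x (G i).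
Proof.
elim: m => [|m IH]; first by split=> // _ i.
rewrite msat_and IH; split=> [[hG hm] i | h].
  by rewrite ltnS leq_eqVlt => /orP [/eqP -> // | /hG].
by split=> [i /ltnW | ]; apply: h.
Qed.

Lemma msat_diaN k f x :
  msat Rel V x (MDiaN k f) <-> exists z, rel_pow Rel k x z /\ msat Rel V z f.
Proof.
elim: k x => [|k IH] x /=; first by split=> [h | [z [-> h]]] //; exists x.
split=> [[y [hxy /IH [z [hyz hz]]]] | [z [[y [hxy hyz]] hz]]].
  by exists z; split=> //; exists y.
by exists y; split=> //; apply/IH; exists z.
Qed.

Lemma msat_boxN k f x :
  msat Rel V x (MBoxN k f) <-> forall z, rel_pow Rel k x z -> msat Rel V z f.
Proof.
split=> [h z hxz | h /msat_diaN [z [hxz hz]]]; last exact: hz (h z hxz).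
by apply: NNPP => hn; apply: h; apply/msat_diaN; exists z.
Qed.

End DerivedConnectives.

Lemma msat_pmorphism (X Y : Type) (RX : X -> X -> Prop) (RY : Y -> Y -> Prop)
    (f : X -> Y) :
  (forall x x', RX x x' -> RY (f x) (f x')) ->
  (forall x y, RY (f x) y -> exists2 x', RX x x' & f x' = y) ->
  forall (V : nat -> Y -> Prop) phi x,
    msat RX (fun p a => V p (f a)) x phi <-> msat RY V (f x) phi.
Proof.
move=> forth back V phi; elim: phi => [p | | a IHa b IHb | a IHa] x //=.
  by rewrite IHa IHb.
split=> [[x' [hxx' ha]] | [y [hy ha]]].
  by exists (f x'); split; [exact: forth | exact/IHa].
have [x' hxx' hx'y] := back _ _ hy.
by exists x'; split=> //; apply/IHa; rewrite hx'y.
Qed.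

Lemma valid_in_frame_pmorphism (X Y : Type) (RX : X -> X -> Prop)
    (RY : Y -> Y -> Prop) (f : X -> Y) phi :
  (forall x x', RX x x' -> RY (f x) (f x')) ->
  (forall x y, RY (f x) y -> exists2 x', RX x x' & f x' = y) ->
  (forall y, exists x, f x = y) ->
  valid_in_frame RX phi -> valid_in_frame RY phi.
Proof.
move=> forth back surj hphi V y; have [x <-] := surj y.
by apply/(msat_pmorphism forth back); apply: hphi.
Qed.

Section DotProduct.
Variable F : realFieldType.

Definition dotv n (u v : 'I_n -> F) : F := \sum_i u i * v i.

Lemma dotvC n (u v : 'I_n -> F) : dotv u v = dotv v u.
Proof. by apply: eq_bigr => i _; rewrite mulrC. Qed.

Lemma dotv_ge0 n (u : 'I_n -> F) : 0 <= dotv u u.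
Proof. by apply: sumr_ge0 => i _; rewrite -expr2 sqr_ge0. Qed.

Lemma dotv_eq0 n (u : 'I_n -> F) : dotv u u = 0 -> forall i, u i = 0.
Proof.
move=> hu i; apply/eqP; rewrite -[_ == _]orbb -mulf_eq0; apply/eqP.
by apply: (psumr_eq0P _ hu) => // j _; rewrite -expr2 sqr_ge0.
Qed.

Lemma dotv_sqr_le n (u v : 'I_n -> F) : dotv u v ^+ 2 <= dotv u u * dotv v v.
Proof.
set A := dotv u u; set B := dotv u v; set C := dotv v v.
have hA := dotv_ge0 u.
pose w i := A * v i - B * u i.
have expand : A * (A * C - B ^+ 2) = dotv w w.
  transitivity
    (\sum_i (A ^+ 2 * (v i * v i) - (2 * A * B) * (u i * v i) + B ^+ 2 * (u i * u i))).
    rewrite !big_split /= sumrN -!mulr_sumr.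
    by rewrite -[\sum_i v i * v i]/C -[\sum_i u i * v i]/B -[\sum_i u i * u i]/A; ring.
  by rewrite /dotv; apply: eq_bigr => i _; rewrite /w; ring.
have [A0 | A_neq0] := eqVneq A 0.
  have -> : B = 0 by apply: big1 => i _; rewrite dotv_eq0 // mul0r.
  by rewrite expr0n /= mulr_ge0 ?dotv_ge0.
have A_gt0 : 0 < A by rewrite lt_def A_neq0 hA.
have := dotv_ge0 w; rewrite -expand pmulr_rge0 //; lra.
Qed.

Definition comb k n (c : 'I_k -> F) (w : 'I_k -> 'I_n -> F) : 'I_n -> F :=
  fun l => \sum_i c i * w i l.

Lemma dotv_combl k n (c : 'I_k -> F) (w : 'I_k -> 'I_n -> F) (u : 'I_n -> F) :
  dotv (comb c w) u = \sum_i c i * dotv (w i) u.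
Proof.
rewrite /dotv /comb (eq_bigr (fun l => \sum_i c i * w i l * u l)) => [|l _]; last first.
  by rewrite mulr_suml.
rewrite exchange_big; apply: eq_bigr => i _; rewrite mulr_sumr.
by apply: eq_bigr => l _; rewrite mulrA.
Qed.

Lemma comb_obtuse_neq0 k n (w : 'I_k -> 'I_n -> F) (u : 'I_n -> F) (c : 'I_k -> F)
    i0 :
  (forall i, dotv (w i) u < 0) -> (forall i, 0 <= c i) -> 0 < c i0 ->
  ~ (forall l, comb c w l = 0).
Proof.
move=> hwu hc hci0 hcomb.
have : dotv (comb c w) u = 0 by apply: big1 => l _; rewrite hcomb mul0r.
rewrite dotv_combl (bigD1 i0) //=; apply/eqP; rewrite lt_eqF //.
have h0 : c i0 * dotv (w i0) u < 0 by rewrite pmulr_rlt0.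
have h1 : \sum_(i | i != i0) c i * dotv (w i) u <= 0.
  by apply: sumr_le0 => i _; rewrite mulr_ge0_le0 // ltW.
lra.
Qed.

Lemma comb_disjoint_eq0 k n (w : 'I_k -> 'I_n -> F) (a b : 'I_k -> F) :
  (forall i j, i != j -> dotv (w i) (w j) < 0) ->
  (forall i, 0 <= a i) -> (forall i, 0 <= b i) -> (forall i, a i * b i = 0) ->
  (forall l, comb a w l = comb b w l) -> forall l, comb a w l = 0.
Proof.
move=> hw ha hb hab hcomb; apply: dotv_eq0; apply/eqP.
rewrite eq_le dotv_ge0 andbT.
have -> : dotv (comb a w) (comb a w) = dotv (comb a w) (comb b w).
  by apply: eq_bigr => l _; congr (_ * _); apply: hcomb.
rewrite dotv_combl; apply: sumr_le0 => i _.
rewrite dotvC dotv_combl mulr_sumr; apply: sumr_le0 => j _; rewrite mulrA.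
have [<- | hij] := eqVneq i j; first by rewrite hab mul0r.
by rewrite mulr_ge0_le0 ?mulr_ge0 // ltW // hw // eq_sym.
Qed.

Lemma dependent_family n (w : 'I_n.+1 -> 'I_n -> F) :
  exists c : 'I_n.+1 -> F, (exists i, c i != 0) /\ forall l, comb c w l = 0.
Proof.
pose A : 'M[F]_(n.+1, n) := \matrix_(i, l) w i l.
have : kermx A != 0.
  by rewrite kermx_eq0 /row_free neq_ltn ltnS rank_leq_col.
case/rowV0Pn => u /sub_kermxP uA0 u_neq0.
exists (fun i => u 0 i); split.
  case: (pickP (fun i => u 0 i != 0)) => [i hi | hu]; first by exists i.
  move: u_neq0; rewrite (_ : u = 0) ?eqxx //.
  by apply/rowP => i; rewrite mxE; apply/eqP/negbFE/hu.
move=> l; have := congr1 (fun M : 'M_(1, n) => M 0 l) uA0; rewrite !mxE => <-.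
by apply: eq_bigr => i _; rewrite mxE.
Qed.

Lemma no_obtuse_family n (v : 'I_n.+2 -> 'I_n -> F) :
  ~ (forall i j, i != j -> dotv (v i) (v j) < 0).
Proof.
move=> hv; pose w i := v (lift ord_max i).
have hw i j : i != j -> dotv (w i) (w j) < 0.
  by move=> hij; rewrite hv // (inj_eq lift_inj).
have hwu i : dotv (w i) (v ord_max) < 0 by rewrite hv // eq_sym neq_lift.
have [c [[i0 ci0] hc]] := dependent_family w.
pose a i := Num.max (c i) 0; pose b i := Num.max (- c i) 0.
have ha i : 0 <= a i by rewrite le_max lexx orbT.
have hb i : 0 <= b i by rewrite le_max lexx orbT.
have hab i : a i * b i = 0.
  rewrite /a /b !maxEle; case: lerP => ?; case: lerP => ?;
  by rewrite ?mulr0 ?mul0r //; lra.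
have hcomb l : comb a w l = comb b w l.
  apply/eqP; rewrite -subr_eq0 /comb -sumrB; apply/eqP.
  rewrite -[RHS](hc l); apply: eq_bigr => i _.
  rewrite -mulrBl; congr (_ * _).
  by rewrite /a /b !maxEle; case: lerP => ?; case: lerP => ?; lra.
have ha0 := comb_disjoint_eq0 hw ha hb hab hcomb.
have hb0 l : comb b w l = 0 by rewrite -hcomb ha0.
have [ci0_lt0 | ci0_gt0] : c i0 < 0 \/ 0 < c i0 by apply/orP; rewrite -neq_lt.
  by apply: (comb_obtuse_neq0 hwu hb (i0 := i0)) => //; rewrite /b lt_max; lra.
by apply: (comb_obtuse_neq0 hwu ha (i0 := i0)) => //; rewrite /a lt_max ci0_gt0.
Qed.

End DotProduct.

Definition sqdist n (x y : Rn n) : R := \sum_i (x i - y i) ^+ 2.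
Definition edist n (x y : Rn n) : R := Num.sqrt (sqdist x y).

Section EuclideanSpace.
Variable n : nat.
Implicit Types x y z : Rn n.

Lemma R_lt1_euclidE x y : R_lt1 (@euclid_dist n) x y <-> edist x y < 1.
Proof.
have E : euclid_dist x y = edist x y.
  rewrite /euclid_dist RsqrtE; congr Num.sqrt.
  by apply: eq_bigr => i _; rewrite RpowE.
by rewrite /R_lt1 E; split=> /RltP.
Qed.

Lemma sqdist_ge0 x y : 0 <= sqdist x y.
Proof. by apply: sumr_ge0 => i _; apply: sqr_ge0. Qed.

Lemma sqdistC x y : sqdist x y = sqdist y x.
Proof. by apply: eq_bigr => i _; rewrite -opprB sqrrN. Qed.

Lemma edistC x y : edist x y = edist y x.
Proof. by rewrite /edist sqdistC. Qed.

Lemma edist_ge0 x y : 0 <= edist x y.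
Proof. exact: sqrtr_ge0. Qed.

Lemma sqr_edist x y : edist x y ^+ 2 = sqdist x y.
Proof. by rewrite sqr_sqrtr // sqdist_ge0. Qed.

Lemma edist_le x y (B : R) : 0 <= B -> sqdist x y <= B ^+ 2 -> edist x y <= B.
Proof.
by move=> B_ge0 h; rewrite /edist -(ger0_norm B_ge0) -sqrtr_sqr ler_sqrt ?sqr_ge0.
Qed.

Lemma sqdist_polar x y z :
  sqdist y z = sqdist x y + sqdist x z
               - 2 * dotv (fun i => y i - x i) (fun i => z i - x i).
Proof.
rewrite /sqdist /dotv mulr_sumr -big_split -sumrB /=.
by apply: eq_bigr => i _; ring.
Qed.

Lemma edist_triangle x y z : edist x z <= edist x y + edist y z.
Proof.
pose u i := x i - y i; pose v i := y i - z i.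
have CS : dotv u v <= edist x y * edist y z.
  rewrite -sqrtrM ?sqdist_ge0 // (le_trans (ler_norm _)) // -sqrtr_sqr ler_sqrt.
    exact: dotv_sqr_le.
  exact: mulr_ge0 (sqdist_ge0 _ _) (sqdist_ge0 _ _).
have E : sqdist x z = sqdist x y + sqdist y z + 2 * dotv u v.
  rewrite /sqdist /dotv mulr_sumr -!big_split /=.
  by apply: eq_bigr => i _; rewrite /u /v; ring.
apply: edist_le; first exact: addr_ge0 (edist_ge0 _ _) (edist_ge0 _ _).
by rewrite E sqrrD !sqr_edist; lra.
Qed.

Lemma edist_scale x y p q (c : R) :
  (forall i, p i - q i = c * (x i - y i)) -> edist p q = `|c| * edist x y.
Proof.
move=> hpq; rewrite /edist; have -> : sqdist p q = c ^+ 2 * sqdist x y.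
  by rewrite /sqdist mulr_sumr; apply: eq_bigr => i _; rewrite hpq exprMn.
by rewrite sqrtrM ?sqr_ge0 // sqrtr_sqr.
Qed.

Lemma rel_pow_lt1P k x z : (0 < k)%N ->
  rel_pow (R_lt1 (@euclid_dist n)) k x z <-> edist x z < k%:R.
Proof.
case: k => // k _; elim: k x => [|k IH] x.
  split=> [[y [/R_lt1_euclidE hxy <-]] // | hxz].
  by exists z; split=> //; apply/R_lt1_euclidE.
split=> [[y [/R_lt1_euclidE hxy /IH hyz]] | hxz].
  by have := edist_triangle x y z; rewrite -natr1; lra.
set K : R := k.+2%:R in hxz.
have K_gt0 : 0 < K by rewrite ltr0n.
have K_gt1 : 1 < K by rewrite ltr1n.
have K_neq0 : K != 0 by rewrite gt_eqF.
pose w i := x i + K^-1 * (z i - x i).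
have dxw : edist x w = K^-1 * edist x z.
  rewrite (@edist_scale x z x w K^-1); last by move=> i; rewrite /w /=; ring.
  by rewrite ger0_norm // invr_ge0 ltW.
have dwz : edist w z = (1 - K^-1) * edist x z.
  (* Arguments of type [R] are parsed in Stdlib's [R_scope], hence the [%R]. *)
  rewrite (@edist_scale x z w z (1 - K^-1)%R); last by move=> i; rewrite /w /=; ring.
  by rewrite ger0_norm // subr_ge0 invf_le1 ?ltW.
exists w; split; first apply/R_lt1_euclidE.
  by rewrite dxw -(mulVf K_neq0) ltr_pM2l // invr_gt0.
apply/IH; rewrite dwz (_ : k.+1%:R = (1 - K^-1) * K); last first.
  by rewrite mulrBl mulVf // mul1r /K -(natr1 k.+1) addrK.
by rewrite ltr_pM2l // subr_gt0 invf_lt1.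
Qed.

Lemma le_edist_of_not_rel_pow k x z :
  ~ rel_pow (R_lt1 (@euclid_dist n)) k x z -> k%:R <= edist x z.
Proof.
case: k => [|k hxz]; first by rewrite edist_ge0.
by rewrite leNgt; apply/negP => /(rel_pow_lt1P _ _ (ltn0Sn k)).
Qed.

End EuclideanSpace.

Definition proj_last n (x : Rn n.+1) : Rn n := fun i => x (widen_ord (leqnSn n) i).

Definition extend_last n (z : Rn n) (t : R) : Rn n.+1 :=
  fun i => if unlift ord_max i is Some j then z j else t.

Lemma proj_extend_last n (z : Rn n) t : proj_last (extend_last z t) = z.
Proof.
apply: functional_extensionality => i; rewrite /proj_last.
have -> : widen_ord (leqnSn n) i = lift ord_max i.
  by apply: val_inj; exact: (esym (lift_max i)).
by rewrite /extend_last liftK.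
Qed.

Lemma sqdist_proj_last n (x y : Rn n.+1) :
  sqdist x y = sqdist (proj_last x) (proj_last y) + (x ord_max - y ord_max) ^+ 2.
Proof. by rewrite /sqdist big_ord_recr. Qed.

Lemma Log_lt1_Rn_S n phi : Log_lt1_Rn n.+1 phi -> Log_lt1_Rn n phi.
Proof.
apply: (@valid_in_frame_pmorphism _ _ _ _ (@proj_last n)).
- move=> x x' /R_lt1_euclidE hxx'; apply/R_lt1_euclidE; apply: le_lt_trans hxx'.
  by rewrite /edist ler_sqrt ?sqdist_ge0 // [leRHS]sqdist_proj_last lerDl sqr_ge0.
- move=> x y /R_lt1_euclidE hxy; exists (extend_last y (x ord_max)).
    apply/R_lt1_euclidE; rewrite /edist sqdist_proj_last proj_extend_last.
    by rewrite /extend_last unlift_none subrr expr0n addr0.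
  exact: proj_extend_last.
- by move=> y; exists (extend_last y 0); exact: proj_extend_last.
Qed.

Definition spread_formula (r : nat -> nat) (k : nat -> nat -> nat) (M : nat) : mformula :=
  MNeg (MAnd (MBigAnd (fun i => MDiaN (r i) (MVar i)) M)
             (MBigAnd (fun i => MBigAnd (fun j =>
                if i == j then MTop
                else MBoxN (r i) (MImp (MVar i) (MNeg (MDiaN (k i j) (MVar j))))) M) M)).

Lemma msat_spread_formula (X : Type) (Rel : X -> X -> Prop) V x r k M :
  msat Rel V x (spread_formula r k M) <->
  ~ ((forall i, (i < M)%N -> exists y, rel_pow Rel (r i) x y /\ V i y) /\
     (forall i j, (i < M)%N -> (j < M)%N -> i != j -> forall y z,
        rel_pow Rel (r i) x y -> V i y -> V j z -> ~ rel_pow Rel (k i j) y z)).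
Proof.
split=> [h [hdia hsep] | h /msat_and [/msat_bigAnd hdia /msat_bigAnd hsep]]; apply: h.
  apply/msat_and; split; apply/msat_bigAnd=> i hi; first by apply/msat_diaN/hdia.
  apply/msat_bigAnd => j hj; case: eqP => [_ h // | /eqP hij].
  apply/msat_boxN => y hxy hy /msat_diaN [z [hyz hz]].
  exact: hsep hxy hy hz hyz.
split=> [i /hdia /msat_diaN // | i j hi hj hij y z hxy hy hz hyz].
move: (hsep i hi) => /msat_bigAnd /(_ j hj); rewrite (negbTE hij).
by move=> /msat_boxN /(_ y hxy hy); apply; apply/msat_diaN; exists z.
Qed.

Lemma dotv_lt0_of_far n (x y z : Rn n) (ry rz k : R) :
  edist x y < ry -> edist x z < rz -> 0 <= k -> k <= edist y z ->
  ry ^+ 2 + rz ^+ 2 <= k ^+ 2 ->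
  dotv (fun i => y i - x i) (fun i => z i - x i) < 0.
Proof.
move=> hy hz k_ge0 hk hr.
have hy2 : sqdist x y < ry ^+ 2.
  by rewrite -sqr_edist ltr_sqr ?nnegrE ?edist_ge0 // (le_trans (edist_ge0 x y) (ltW hy)).
have hz2 : sqdist x z < rz ^+ 2.
  by rewrite -sqr_edist ltr_sqr ?nnegrE ?edist_ge0 // (le_trans (edist_ge0 x z) (ltW hz)).
have hk2 : k ^+ 2 <= sqdist y z by rewrite -sqr_edist ler_sqr ?nnegrE ?edist_ge0.
have := sqdist_polar x y z; lra.
Qed.

Lemma spread_formula_valid n (r : nat -> nat) (k : nat -> nat -> nat) :
  (forall i, (0 < r i)%N) ->
  (forall i j, (i < n.+2)%N -> (j < n.+2)%N -> i != j ->
     (r i ^ 2 + r j ^ 2 <= k i j ^ 2)%N) ->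
  Log_lt1_Rn n (spread_formula r k n.+2).
Proof.
move=> r_gt0 hrk V x; apply/msat_spread_formula => -[hreach hsep].
have /choice [y hy] : forall i : 'I_n.+2, exists z,
    rel_pow (R_lt1 (@euclid_dist n)) (r i) x z /\ V i z by move=> i; apply: hreach.
apply: (@no_obtuse_family _ n (fun i l => y i l - x l)) => i j hij.
have [hxi hVi] := hy i; have [hxj hVj] := hy j.
apply: (dotv_lt0_of_far (k := (k i j)%:R)); rewrite ?ler0n //.
- exact/(rel_pow_lt1P _ _ (r_gt0 i)).
- exact/(rel_pow_lt1P _ _ (r_gt0 j)).
- exact: le_edist_of_not_rel_pow (hsep i j (ltn_ord i) (ltn_ord j) hij _ _ hxi hVi hVj).
- by rewrite -!natrX -natrD ler_nat hrk.
Qed.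

Lemma spread_formula_refuted n M (c : Rn n) (y : nat -> Rn n) (r : nat -> nat)
    (k : nat -> nat -> nat) :
  (forall i, (i < M)%N -> edist c (y i) < (r i)%:R) ->
  (forall i j, (i < M)%N -> (j < M)%N -> i != j ->
     (0 < k i j)%N /\ (k i j)%:R <= edist (y i) (y j)) ->
  ~ Log_lt1_Rn n (spread_formula r k M).
Proof.
move=> hr hk /(_ (fun p z => z = y p) c) /msat_spread_formula; apply; split.
  move=> i hi; exists (y i); split=> //.
  have r_gt0 : (0 < r i)%N.
    by rewrite -(ltr0n R) (le_lt_trans (edist_ge0 _ _) (hr i hi)).
  exact/(rel_pow_lt1P _ _ r_gt0)/hr.
move=> i j hi hj hij _ _ _ -> ->; have [k_gt0 hkd] := hk i j hi hj hij.
by move/(rel_pow_lt1P _ _ k_gt0); rewrite ltNge hkd.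
Qed.

Lemma truncn_succ_sqr_add_le (F : archiRealFieldType) (a b d B : F) :
  0 <= a <= B -> 0 <= b <= B -> 0 <= d <= B ->
  a ^+ 2 + b ^+ 2 + 6 * B + 3 <= d ^+ 2 ->
  ((Num.truncn a).+1 ^ 2 + (Num.truncn b).+1 ^ 2 <= Num.truncn d ^ 2)%N.
Proof.
move=> /andP[a_ge0 aB] /andP[b_ge0 bB] /andP[d_ge0 dB] h.
have ta : (Num.truncn a).+1%:R ^+ 2 <= (a + 1) ^+ 2 :> F.
  rewrite ler_sqr ?nnegrE ?ler0n ?addr_ge0 // -natr1 lerD2r.
  by case/andP: (truncn_itv a_ge0).
have tb : (Num.truncn b).+1%:R ^+ 2 <= (b + 1) ^+ 2 :> F.
  rewrite ler_sqr ?nnegrE ?ler0n ?addr_ge0 // -natr1 lerD2r.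
  by case/andP: (truncn_itv b_ge0).
have d_ge1 : 1 <= d by nra.
have td : (d - 1) ^+ 2 <= (Num.truncn d)%:R ^+ 2 :> F.
  rewrite ler_sqr ?nnegrE ?ler0n ?subr_ge0 // lerBlDr natr1 ltW //.
  by case/andP: (truncn_itv d_ge0).
rewrite -(ler_nat F) natrD !natrX; nra.
Qed.

Lemma sum_delta N p (a : R) :
  \sum_(l < N) (if (l : nat) == p then a else 0) = (p < N)%N%:R * a.
Proof.
by rewrite -big_mkcond big_ord1_eq; case: (p < N)%N; rewrite ?mul1r ?mul0r.
Qed.

Section Simplex.
Variable N : nat.
Let s : R := N.+1%:R.
(* Around the centre T (1, ..., 1), the vertices T s e_i (i < N) and 0 are pairwise
   obtuse: the squared distance between two vertices exceeds the sum of their squared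
   distances to the centre by at least 2 T^2, and for this T that margin absorbs the
   rounding in truncn_succ_sqr_add_le. *)
Let T := 6 * s + 2.

Definition simplex_centre : Rn N := fun _ => T.

Definition simplex_vertex (p : nat) : Rn N :=
  fun l => if (l : nat) == p then T * s else 0.

Definition simplex_radius (p : nat) : nat :=
  (Num.truncn (edist simplex_centre (simplex_vertex p))).+1.

Definition simplex_gap (i j : nat) : nat :=
  Num.truncn (edist (simplex_vertex i) (simplex_vertex j)).

Lemma sqdist_simplex_centre p :
  sqdist simplex_centre (simplex_vertex p)
  = T ^+ 2 * (N%:R + (p < N)%N%:R * (s ^+ 2 - 2 * s)).
Proof.
rewrite /sqdist (eq_bigr (fun l : 'I_N =>
    T ^+ 2 + (if (l : nat) == p then T ^+ 2 * (s ^+ 2 - 2 * s) else 0))); last first.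
  by move=> l _; rewrite /simplex_centre /simplex_vertex; case: eqP => _; ring.
by rewrite big_split sum_delta /= sumr_const card_ord -mulr_natl; ring.
Qed.

Lemma sqdist_simplex_vertex i j : i != j ->
  sqdist (simplex_vertex i) (simplex_vertex j)
  = T ^+ 2 * s ^+ 2 * ((i < N)%N%:R + (j < N)%N%:R).
Proof.
move=> hij; rewrite /sqdist (eq_bigr (fun l : 'I_N =>
    (if (l : nat) == i then T ^+ 2 * s ^+ 2 else 0)
    + (if (l : nat) == j then T ^+ 2 * s ^+ 2 else 0))); last first.
  move=> l _; rewrite /simplex_vertex.
  case: eqP => [li | _]; case: eqP => [lj | _]; rewrite ?subrr ?expr0n //=; try ring.
  by move: hij; rewrite -li -lj eqxx.
by rewrite big_split !sum_delta /=; ring.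
Qed.

Lemma simplex_radius_gap i j : (i < N.+1)%N -> (j < N.+1)%N -> i != j ->
  (simplex_radius i ^ 2 + simplex_radius j ^ 2 <= simplex_gap i j ^ 2)%N.
Proof.
wlog i_lt : i j / (i < N)%N.
  move=> wlog hi hj hij; have [|i_ge] := ltnP i N; first by move=> ?; apply: wlog.
  have j_lt : (j < N)%N by move: hij; rewrite neq_ltn; lia.
  by rewrite addnC /simplex_gap edistC wlog // eq_sym.
move=> _ _ hij.
have s_ge1 : 1 <= s by rewrite ler1n.
have N_eq : N%:R = s - 1 by rewrite /s -natr1 addrK.
have T_large : 12 * T * s + 3 <= 2 * T ^+ 2.
  rewrite -subr_ge0 (_ : _ - _ = 4 * T - 3); first by rewrite /T; lra.
  by rewrite /T; ring.
have le_B E : E <= 4 * s ^+ 2 -> T ^+ 2 * E <= (2 * T * s) ^+ 2.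
  move=> hE; rewrite (_ : (2 * T * s) ^+ 2 = T ^+ 2 * (4 * s ^+ 2)); last by ring.
  by rewrite ler_wpM2l ?sqr_ge0.
have B_ge0 : 0 <= 2 * T * s by rewrite /T; nra.
apply: (truncn_succ_sqr_add_le (B := 2 * T * s)); rewrite ?edist_ge0 /=.
- apply: edist_le B_ge0 _; rewrite sqdist_simplex_centre; apply: le_B.
  by rewrite i_lt /= N_eq; nra.
- apply: edist_le B_ge0 _; rewrite sqdist_simplex_centre; apply: le_B.
  by rewrite N_eq; case: (j < N)%N => /=; nra.
- apply: edist_le B_ge0 _; rewrite sqdist_simplex_vertex // -mulrA; apply: le_B.
  by rewrite i_lt; case: (j < N)%N => /=; nra.
have : 0 <= T ^+ 2 * s by rewrite mulr_ge0 ?sqr_ge0 // (le_trans ler01).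
rewrite !sqr_edist !sqdist_simplex_centre sqdist_simplex_vertex // i_lt N_eq.
by case: (j < N)%N => /=; nra.
Qed.

End Simplex.

Theorem proposition3p7 (n : nat) (hn : (1 <= n)%N) :
  (forall phi : mformula, Log_lt1_Rn n.+1 phi -> Log_lt1_Rn n phi) /\
  (exists phi : mformula, Log_lt1_Rn n phi /\ ~ Log_lt1_Rn n.+1 phi).
Proof.
split=> [phi | ]; first exact: Log_lt1_Rn_S.
exists (spread_formula (simplex_radius n.+1) (simplex_gap n.+1) n.+2); split.
  by apply: spread_formula_valid => // i j; apply: simplex_radius_gap.
apply: (@spread_formula_refuted _ _ (@simplex_centre n.+1) (@simplex_vertex n.+1)).
  by move=> i _; apply: truncnS_gt.
move=> i j hi hj hij; split; last by rewrite truncn_le edist_ge0.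
by have := simplex_radius_gap hi hj hij; case: simplex_gap.
Qed.
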